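(* Let $\mathbf{S}$ be a $k$-safety hyperproperty over a finite alphabet $\Sigma$, let $\mathcal{O} = (S,E,\Delta)$ be an observation table for $\mathbf{S}$ over the alphabet $\Sigma^{k'}$ for some $k' \in \mathbb{N}$, and let $k'' > k'$. Let $\mathcal{O}' = (S',E',\Delta')$ be the observation table over $\Sigma^{k''}$ with $S' = \{\epsilon\} \cup \{\mathrm{extend}(s,k'') \mid s \in S\}$, $E' = \{\epsilon\} \cup \{\mathrm{extend}(e,k'') \mid e \in E\}$, and $\Delta'$ defined on $(S' \cup S'\cdot\Sigma^{k''})\cdot E'$ by membership (i.e., $\Delta'(w) = 1$ iff $\mathrm{unzip}(w) \in \mathrm{Bad}(\mathbf{S})$). Then $|\mathrm{row}(S)| = |\mathrm{row}(S')|$.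
   Context: For a finite set $T \subseteq \Sigma^*$ and $T' \subseteq \Sigma^\omega$, write $T \le T'$ if every $t \in T$ is a prefix of some $t' \in T'$. For a hyperproperty $\mathbf{S} \subseteq \mathcal{P}(\Sigma^\omega)$, $\mathrm{Bad}(\mathbf{S}) = \{T \subseteq \Sigma^* \text{ finite} \mid \forall T' \subseteq \Sigma^\omega.\ T \le T' \Rightarrow T' \notin \mathbf{S}\}$; $\mathbf{S}$ is $k$-safety if every $T' \notin \mathbf{S}$ has some $T \in \mathrm{Bad}(\mathbf{S})$ with $|T| \le k$ and $T \le T'$. For $\sigma = v_0 \cdots v_m \in (\Sigma^{n})^*$, $\mathrm{unzip}(\sigma)$ is the set of the $n$ component words $v_0[i]\cdots v_m[i]$. An observation table for $\mathbf{S}$ over $\Sigma^n$ is a triple $(S,E,\Delta)$ where $S \subseteq (\Sigma^n)^*$ is a nonempty finite prefix-closed set, $E \subseteq (\Sigma^n)^*$ is a nonempty finite suffix-closed set, and $\Delta : (S \cup S\cdot\Sigma^n)\cdot E \to \{0,1\}$ with $\Delta(w) = 1$ iff $\mathrm{unzip}(w) \in \mathrm{Bad}(\mathbf{S})$. For $s \in S \cup S\cdot \Sigma^n$, $\mathrm{row}(s): E \to \{0,1\}$ is $\mathrm{row}(s)(e) = \Delta(s\cdot e)$, and $\mathrm{row}(S) = \{\mathrm{row}(s) \mid s \in S\}$. For a letter $(a_1,\dots,a_{k'}) \in \Sigma^{k'}$ and $k'' > k'$, $\mathrm{extend}((a_1,\dots,a_{k'}),k'') = (a_1,\dots,a_{k'},a_{k'},\dots,a_{k'})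 \in \Sigma^{k''}$ (the last component repeated), extended letterwise to words. *)

From mathcomp Require Import all_boot.
Set Implicit Arguments. Unset Strict Implicit. Unset Printing Implicit Defensive.

Section Defs.
Variable Sigma : finType.

Definition fword := seq Sigma.
Definition iword := nat -> Sigma.
Definition hyperprop := (iword -> Prop) -> Prop.

Definition iprefix (t : fword) (t' : iword) : Prop := t = mkseq t' (size t).

(* T <= T' for a finite set T (given as a list, membership semantics) *)
Definition le_sets (T : seq fword) (T' : iword -> Prop) : Prop :=
  forall t, t \in T -> exists t', T' t' /\ iprefix t t'.

Definition Bad (HS : hyperprop) (T : seq fword) : Prop :=
  forall T' : iword -> Prop, le_sets T T' -> ~ HS T'.

(* k-safety; |T| <= k with T a duplicate-free list *)
Definition k_safety (k : nat) (HS : hyperprop) : Prop :=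
  forall T' : iword -> Prop, ~ HS T' ->
    exists T : seq fword, [/\ uniq T, size T <= k, Bad HS T & le_sets T T'].

(* A letter of Sigma^n is represented by a list of length n;
   a word over Sigma^n is a list of such letters. *)
Definition letter := seq Sigma.
Definition nword := seq letter.
Definition is_letter (n : nat) (a : letter) : bool := size a == n.
Definition is_nword (n : nat) (w : nword) : bool := all (is_letter n) w.

(* unzip: the set (as a list) of the n component words *)
Definition component (w : nword) (i : nat) : fword := pmap (fun v => onth v i) w.
Definition unzip (n : nat) (w : nword) : seq fword := [seq component w i | i <- iota 0 n].

Definition extend (m : nat) (a : letter) : letter :=
  match a with
  | [::] => [::]
  | x :: s => a ++ nseq (m - size a) (last x s)
  end.
Definition extend_word (m : nat) (w : nword) : nword := map (extend m) w.

Definition obs_table_struct (n : nat) (S E : seq nword) : Prop :=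
  [/\ S != [::], all (is_nword n) S & (forall s i, s \in S -> take i s \in S)] /\
  [/\ E != [::], all (is_nword n) E & (forall e i, e \in E -> drop i e \in E)].

Definition delta_def (HS : hyperprop) (n : nat) (S E : seq nword) (Delta : nword -> bool) : Prop :=
  (forall s e, s \in S -> e \in E -> (Delta (s ++ e) <-> Bad HS (unzip n (s ++ e)))) /\
  (forall s a e, s \in S -> is_letter n a -> e \in E ->
      (Delta (s ++ a :: e) <-> Bad HS (unzip n (s ++ a :: e)))).

Definition obs_table (HS : hyperprop) (n : nat) (S E : seq nword) (Delta : nword -> bool) : Prop :=
  obs_table_struct n S E /\ delta_def HS n S E Delta.

(* row(s) : E -> {0,1}, represented by its graph listed along E *)
Definition row (Delta : nword -> bool) (E : seq nword) (s : nword) : seq bool :=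
  [seq Delta (s ++ e) | e <- E].

Definition card_rows (Delta : nword -> bool) (S E : seq nword) : nat :=
  size (undup [seq row Delta E s | s <- S]).

End Defs.

From mathcomp Require Import all_boot.
Set Implicit Arguments. Unset Strict Implicit.

(* Padding every letter of a word over Sigma^k' by repeating its last component
   only duplicates the last component word, so the unzipped set of words, and
   hence badness, is unchanged: Delta' (extend s . extend e) = Delta (s . e).
   The row of extend s in the new table is thus the old row of s preceded by
   the entry for the added empty suffix; since E already contains the empty
   word, that entry is a coordinate of the old row, so extended rows agree iff
   the old ones do.  The added empty prefix is extend of the empty prefix of S
   and contributes no new row. *)

Section Extend.
Variable Sigma : finType.

Lemma onth_extend m (a : letter Sigma) i : i < m ->
  onth (extend m a) i = onth a (minn i (size a).-1).
Proof.
case: a => [|x s] lt_im; first by rewrite /= !onth0n.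
rewrite /extend onth_cat; case: ltnP => [lt_is|le_si].
  by rewrite (minn_idPl _) // -ltnS.
rewrite (minn_idPr _); last exact: leq_trans (leq_pred _) le_si.
rewrite onth_nseq ltn_sub2r ?(leq_ltn_trans le_si lt_im) //.
by rewrite onthE (nth_map x) //= -(last_nth x).
Qed.

Lemma component_extend_word n m (w : nword Sigma) i : is_nword n w -> i < m ->
  component (extend_word m w) i = component w (minn i n.-1).
Proof.
move=> w_n lt_im; elim: w w_n => [|a w IHw] //= /andP[/eqP size_a w_n].
by move: (IHw w_n); rewrite /component /= onth_extend // size_a => ->.
Qed.

Lemma unzip_extend_word n m (w : nword Sigma) : 0 < n -> n <= m ->
  is_nword n w -> unzip m (extend_word m w) =i unzip n w.
Proof.
move=> n_gt0 le_nm w_n t; apply/mapP/mapP => -[i]; rewrite mem_iota /= => lt_i ->.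
  rewrite (component_extend_word w_n) //; exists (minn i n.-1) => //.
  by rewrite mem_iota /= (leq_ltn_trans (geq_minr _ _)) // prednK.
have lt_im := leq_trans lt_i le_nm.
exists i; first by rewrite mem_iota.
by rewrite (component_extend_word w_n) // (minn_idPl _) // -ltnS prednK.
Qed.

Lemma Bad_eq_mem (HS : hyperprop Sigma) (T1 T2 : seq (fword Sigma)) :
  T1 =i T2 -> Bad HS T1 <-> Bad HS T2.
Proof.
by move=> eqT; split=> bad T' le_T'; apply: bad => t t_in; apply: le_T';
  rewrite ?eqT // -eqT.
Qed.

End Extend.

Lemma nil_in_prefix_closed (T : eqType) (S : seq (seq T)) :
  S != [::] -> (forall s i, s \in S -> take i s \in S) -> [::] \in S.
Proof. by case: S => // s S' _ /(_ s 0); rewrite take0 mem_head; apply. Qed.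

Lemma nil_in_suffix_closed (T : eqType) (E : seq (seq T)) :
  E != [::] -> (forall e i, e \in E -> drop i e \in E) -> [::] \in E.
Proof.
by case: E => // e E' _ /(_ e (size e)); rewrite drop_size mem_head; apply.
Qed.

Section ExtendedTable.
Variables (Sigma : finType) (HS : hyperprop Sigma) (k' k'' : nat).
Variables (S E : seq (nword Sigma)) (Delta Delta' : nword Sigma -> bool).
Hypothesis k'_gt0 : 0 < k'.
Hypothesis lt_k'k'' : k' < k''.
Hypothesis table : obs_table HS k' S E Delta.

Let S' := [::] :: [seq extend_word k'' s | s <- S].
Let E' := [::] :: [seq extend_word k'' e | e <- E].
Hypothesis delta'_def : delta_def HS k'' S' E' Delta'.

Lemma nil_in_suffixes : [::] \in E.
Proof. by case: table => [[_ [E_ne _ E_suf]] _]; exact: nil_in_suffix_closed. Qed.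

Lemma nil_in_prefixes : [::] \in S.
Proof. by case: table => [[[S_ne _ S_pre] _] _]; exact: nil_in_prefix_closed. Qed.

Lemma Delta'_extend s e : s \in S -> e \in E ->
  Delta' (extend_word k'' s ++ extend_word k'' e) = Delta (s ++ e).
Proof.
case: table => [[[_ S_n _] [_ E_n _]] [Delta_mem _]] s_in e_in.
have se_n : is_nword k' (s ++ e).
  by rewrite /is_nword all_cat; apply/andP; split; [apply: (allP S_n) | apply: (allP E_n)].
have [Delta'_mem _] := delta'_def.
have s'_in : extend_word k'' s \in S' by rewrite inE map_f ?orbT.
have e'_in : extend_word k'' e \in E' by rewrite inE map_f ?orbT.
have new_bad := Delta'_mem _ _ s'_in e'_in.
have old_bad := Delta_mem _ _ s_in e_in.
have ext_bad := Bad_eq_mem HS (unzip_extend_word k'_gt0 (ltnW lt_k'k'') se_n).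
rewrite /extend_word -map_cat in new_bad *.
by apply/idP/idP; tauto.
Qed.

Let cons_nil_entry (r : seq bool) := nth false r (index [::] E) :: r.

Lemma row_extend s : s \in S ->
  row Delta' E' (extend_word k'' s) = cons_nil_entry (row Delta E s).
Proof.
move=> s_in; rewrite /row /cons_nil_entry /= -map_comp.
rewrite (nth_map [::]) ?index_mem ?nil_in_suffixes // nth_index ?nil_in_suffixes //.
rewrite -(Delta'_extend s_in nil_in_suffixes); congr (_ :: _).
by apply/eq_in_map => e e_in /=; rewrite Delta'_extend.
Qed.

Lemma card_rows_extend : card_rows Delta S E = card_rows Delta' S' E'.
Proof.
have rows' : [seq row Delta' E' s | s <- S'] =
    row Delta' E' [::] :: [seq cons_nil_entry (row Delta E s) | s <- S].
  by rewrite map_cons -map_comp; congr (_ :: _); apply/eq_in_map; exact: row_extend.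
have nil_row : row Delta' E' [::] \in [seq cons_nil_entry (row Delta E s) | s <- S].
  by apply/mapP; exists [::]; [exact: nil_in_prefixes | exact: row_extend nil_in_prefixes].
rewrite /card_rows rows'; move: nil_row.
set rows := [seq cons_nil_entry _ | s <- S] => /= ->.
have cons_nil_entry_inj : injective cons_nil_entry by move=> r1 r2 [].
by rewrite /rows (map_comp cons_nil_entry) (undup_map_inj cons_nil_entry_inj) size_map.
Qed.

End ExtendedTable.

Theorem lemma6 (Sigma : finType) (HS : hyperprop Sigma) (k k' k'' : nat)
    (S E : seq (nword Sigma)) (Delta Delta' : nword Sigma -> bool) :
  0 < k' -> k' < k'' ->
  k_safety k HS ->
  obs_table HS k' S E Delta ->
  delta_def HS k'' ([::] :: [seq extend_word k'' s | s <- S])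
                   ([::] :: [seq extend_word k'' e | e <- E]) Delta' ->
  card_rows Delta S E =
  card_rows Delta' ([::] :: [seq extend_word k'' s | s <- S])
                   ([::] :: [seq extend_word k'' e | e <- E]).
Proof.
by move=> k'_gt0 lt_k'k'' _; apply: card_rows_extend.
Qed.
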